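(* Let $G$, $\mathcal{G}$, the upper layer $l$, the class $i$ and the helper graph $\mathcal{H}_i$ be as in the context, and suppose every virtual node of layer $l$ knows the class and component identifier of each of its old neighbors. Then, in the V-CONGEST model on $G$, where each real node simulates its two virtual copies on layer $l$, the helper graph $\mathcal{H}_i$ can be constructed in $O(\Delta)$ rounds by the following protocol: every type-2 node $v$ that adds a node $v_{\mathcal{C}}$ sends the class $i$ and the identifier of $\mathcal{C}$ to its type-1 neighbors; every type-1 node $w$ receiving such a message checks whether it has no neighbor in $\mathcal{C}$ and a neighbor in another component of class $i$, and if so adds $w_{\mathcal{C}}$ and the edge $\{v_{\mathcal{C}},w_{\mathcal{C}}\}$ and responds to that message.
   Context: $G=(V,E)$ is a finite undirected graph on $n$ nodes with maximum degree $\Delta$. Fix an integer $L$. The virtual graph $\mathcal{G}$ contains $3L$ copies of each $v\in V$: each lower layer $1,\dots,L$ contains one copy of every node; each upper layer $L+1,\dots,2L$ contains a type-1 copy and a type-2 copy of every node. Every copy of $v$ is adjacent to all other copies of $v$ and to all copies of each neighbor of $v$ in $G$. $\Psi$ maps virtual nodes to the corresponding real nodes. There are classes $1,\dots,t$. For a fixed upper layer $l$, the nodes of layers $1,\dots,l-1$ are old nodes, each assigned a class; a component of class $i$ is a connected component of the subgraph of $\mathcal{G}$ induced by the old nodes of class $i$. The helper graph $\mathcal{H}_i[\mathcal{C}]$ for a component $\mathcal{C}$ of class $i$: for each type-2 node $v$ of layer $l$, a node $v_{\mathcal{C}}$ is added iff $\Psi(v)\notin\Psi(\mathcal{C})$,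 $v$ has a neighbor in $\mathcal{C}$, and $v$ has no neighbor in another component of class $i$; for each such $v_{\mathcal{C}}$ and each type-1 neighbor $w$ of $v$ on layer $l$ that has a neighbor in some component $\mathcal{C}'\neq\mathcal{C}$ of class $i$ but no neighbor in $\mathcal{C}$, a node $w_{\mathcal{C}}$ and edge $\{v_{\mathcal{C}},w_{\mathcal{C}}\}$ are added. $\mathcal{H}_i$ is the disjoint union of all $\mathcal{H}_i[\mathcal{C}]$. V-CONGEST model: synchronous rounds in which each node may send one identical message of $O(\log n)$ bits to all its neighbors in $G$. *)

From mathcomp Require Import all_boot.
Set Implicit Arguments. Unset Strict Implicit. Unset Printing Implicit Defensive.

Section VirtualGraph.
Variables (T : finType) (e : rel T) (L : nat).

(* Virtual nodes: lower copies (v, k) on layer k+1 (1..L);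
   upper copies (v, k, b) on layer L+k+1 (L+1..2L); b = false: type-1, b = true: type-2. *)
Definition vnode := ((T * 'I_L) + (T * 'I_L * bool))%type.

Definition Psi (x : vnode) : T :=
  match x with inl (v, _) => v | inr (v, _, _) => v end.

Definition layer (x : vnode) : nat :=
  match x with inl (_, k) => k.+1 | inr (_, k, _) => L + k.+1 end.

Definition vadj : rel vnode := fun x y =>
  (x != y) && ((Psi x == Psi y) || e (Psi x) (Psi y)).

Variable l : 'I_L.   (* the upper layer L + l + 1 *)
Definition type1 (u : T) : vnode := inr (u, l, false).
Definition type2 (u : T) : vnode := inr (u, l, true).
Definition old (x : vnode) : bool := layer x < L + l.+1.

Variables (cls : vnode -> nat) (i : nat).
Definition oldc (x : vnode) : bool := old x && (cls x == i).

Definition sameComp (x y : vnode) : bool :=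
  connect (fun a b => [&& oldc a, oldc b & vadj a b]) x y.

(* helper node v_C is added, for v = type-2 copy of u, C = component of x *)
Definition HNode (u : T) (x : vnode) : bool :=
  [&& ~~ [exists y, sameComp x y && (Psi y == u)],
      vadj (type2 u) x &
      [forall y, (oldc y && vadj (type2 u) y) ==> sameComp x y]].

(* helper edge {v_C, w_C}, v = type-2 copy of v', w = type-1 copy of w',
   C = component of x *)
Definition HEdge (v' w' : T) (x : vnode) : bool :=
  [&& HNode v' x, vadj (type2 v') (type1 w'),
      [exists y, [&& oldc y, vadj (type1 w') y & ~~ sameComp x y]] &
      [forall y, (oldc y && sameComp x y) ==> ~~ vadj (type1 w') y]].

End VirtualGraph.

Definition msg := seq bool.

Record LocalInput := {
  li_id : nat;
  li_n : nat;
  li_class : nat;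
  li_nbr : nat -> bool;
  li_old : nat -> nat -> nat -> bool  (* li_old y j c: some old virtual neighbour
                                         of u's layer-l copies, a copy of the real
                                         node with id y, has class j and component id c *)
}.

Record Output := {
  o_vC : nat -> bool;          (* o_vC c: type-2 copy of u has node v_C, id(C) = c *)
  o_vE : nat -> nat -> bool;   (* o_vE c y: edge {v_C, w_C}, w = type-1 copy of node with id y *)
  o_wE : nat -> nat -> bool    (* o_wE c y: edge {v_C, w_C}, w = type-1 copy of u,
                                  v = type-2 copy of node with id y *)
}.

Record Alg := {
  a_state : Type;
  a_init : LocalInput -> a_state;
  a_send : a_state -> option msg;     (* one broadcast message (or silence) per round *)
  a_step : a_state -> (nat -> option msg) -> a_state;  (* inbox indexed by sender id *)
  a_out : a_state -> option Output
}.

Section Run.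
Variables (T : finType) (e : rel T) (L : nat) (l : 'I_L)
          (cls : vnode T L -> nat) (i : nat) (cid : vnode T L -> nat) (id : T -> nat).

Definition local_input (u : T) : LocalInput := {|
  li_id := id u;
  li_n := #|T|;
  li_class := i;
  li_nbr := fun y => [exists w, e u w && (id w == y)];
  li_old := fun y j c => [exists x, [&& old l x, vadj e (type1 l u) x,
                                      id (Psi x) == y, cls x == j & cid x == c]]
|}.

Variable A : Alg.

Fixpoint run (r : nat) (u : T) : a_state A :=
  match r with
  | 0 => @a_init A (local_input u)
  | r'.+1 => @a_step A (run r' u)
      (fun y => match [pick w | e u w && (id w == y)] with
                | Some w => @a_send A (run r' w)
                | None => None
                end)
  end.

Definition correct_output (u : T) (o : Output) : Prop :=
  (forall c, o_vC o c <-> exists x, [/\ oldc l cls i x, cid x = c & HNode e l cls i u x]) /\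
  (forall c y, o_vE o c y <-> exists x w,
       [/\ oldc l cls i x, cid x = c, id w = y & HEdge e l cls i u w x]) /\
  (forall c y, o_wE o c y <-> exists x v,
       [/\ oldc l cls i x, cid x = c, id v = y & HEdge e l cls i v u x]).

End Run.

Definition maxdeg (T : finType) (e : rel T) : nat := \max_(u : T) #|[pred w | e u w]|.

From Stdlib Require Import ClassicalEpsilon.
From mathcomp Require Import all_boot.
Set Implicit Arguments. Unset Strict Implicit. Unset Printing Implicit Defensive.

(* The two layer-l copies of a real node u have the same old neighbours, so u knows
   all of them.  From this the type-2 copy decides whether it adds a node v_C (C the
   only component of class i it touches, containing no copy of u), and the type-1 copy
   decides whether it accepts an announced C (it touches another component of class i
   but not C).  In round 0 the type-2 copies broadcast the identifier of C; in the
   following rounds each type-1 copy acknowledges the announcements it accepts, one per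
   round, by broadcasting the announcer's identifier.  A node has at most Delta
   neighbours, so round Delta + 1 is silent, and once a silent round has passed every
   node knows all its helper edges.  Identifiers are below n^k, so messages have
   O(k log n) bits. *)

Definition classic_bool (P : Prop) : bool :=
  if excluded_middle_informative P then true else false.

Lemma classic_boolP (P : Prop) : reflect P (classic_bool P).
Proof. by rewrite /classic_bool; case: excluded_middle_informative => H; constructor. Qed.

Fixpoint bits (w x : nat) : msg := if w is w'.+1 then odd x :: bits w' x./2 else [::].

Fixpoint bits_val (s : msg) : nat := if s is b :: s' then b + (bits_val s').*2 else 0.

Lemma size_bits w x : size (bits w x) = w.
Proof. by elim: w x => [|w IH] x //=; rewrite IH. Qed.

Lemma bitsK w x : x < 2 ^ w -> bits_val (bits w x) = x.
Proof.
elim: w x => [|w IH] x /=; first by rewrite expn0 ltnS leqn0 => /eqP.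
by move=> hx; rewrite IH ?odd_double_half // ltn_half_double -mul2n -expnS.
Qed.

Section Protocol.
Variable k : nat.

Definition width (li : LocalInput) : nat := (trunc_log 2 (li_n li)).+1 * k.

Definition id_bound (li : LocalInput) : nat := li_n li ^ k.

Definition sees_comp (li : LocalInput) (c : nat) : Prop :=
  exists y, li_old li y (li_class li) c.

Definition announces (li : LocalInput) (c : nat) : Prop :=
  [/\ sees_comp li c, forall y c', li_old li y (li_class li) c' -> c' = c
    & ~ li_old li (li_id li) (li_class li) c].

Definition accepts (li : LocalInput) (c : nat) : Prop :=
  (exists2 c', sees_comp li c' & c' <> c) /\ ~ sees_comp li c.

Definition announcement (li : LocalInput) : option msg :=
  match excluded_middle_informative (exists c, announces li c) with
  | left H => Some (bits (width li) (proj1_sig (constructive_indefinite_description _ H)))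
  | right _ => None
  end.

Definition responses (li : LocalInput) (heard : nat -> option msg) : seq nat :=
  [seq y <- iota 0 (id_bound li) | li_nbr li y &&
     (if heard y is Some m then classic_bool (accepts li (bits_val m)) else false)].

(* [st_heard j y] is the message received in round [j] from the neighbour with
   identifier [y]. *)
Record state := { st_input : LocalInput; st_round : nat;
                  st_heard : nat -> nat -> option msg }.

Definition send (s : state) : option msg :=
  if st_round s is j.+1 then
    let R := responses (st_input s) (st_heard s 0) in
    if j < size R then Some (bits (width (st_input s)) (nth 0 R j)) else None
  else announcement (st_input s).

Definition step (s : state) (inbox : nat -> option msg) : state :=
  {| st_input := st_input s; st_round := (st_round s).+1;
     st_heard := fun j => if j == st_round s then inbox else st_heard s j |}.

Definition silent_round_passed (s : state) : Prop :=
  exists2 j, 0 < j < st_round s & forall y, st_heard s j y = None.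

Definition acknowledged_by (s : state) (y : nat) : Prop :=
  exists2 j, 0 < j < st_round s &
    st_heard s j y = Some (bits (width (st_input s)) (li_id (st_input s))).

Definition output (s : state) : option Output :=
  if classic_bool (silent_round_passed s) then Some
    {| o_vC := fun c => classic_bool (announces (st_input s) c);
       o_vE := fun c y =>
         classic_bool (announces (st_input s) c /\ acknowledged_by s y);
       o_wE := fun c y => classic_bool (exists2 m, st_heard s 0 y = Some m &
                                          bits_val m = c /\ accepts (st_input s) c) |}
  else None.

Definition helper_protocol : Alg :=
  {| a_state := state;
     a_init := fun li => {| st_input := li; st_round := 0; st_heard := fun _ _ => None |};
     a_send := send; a_step := step; a_out := output |}.

End Protocol.

Section VirtualAdjacency.
Variables (T : finType) (e : rel T) (L : nat) (l : 'I_L).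

Lemma vadj_upper_old b u x :
  old l x -> vadj e (inr (u, l, b)) x = (u == Psi x) || e u (Psi x).
Proof.
move=> oldx; rewrite /vadj; case: eqP => [hx|//].
by move: oldx; rewrite -hx /old /= ltnn.
Qed.

Lemma vadj_type12 u x : old l x -> vadj e (type1 l u) x = vadj e (type2 l u) x.
Proof. by move=> oldx; rewrite !vadj_upper_old. Qed.

Lemma vadj_type2_type1 v w : vadj e (type2 l v) (type1 l w) = (v == w) || e v w.
Proof. by rewrite /vadj; have -> : type2 l v != type1 l w by apply/eqP; case. Qed.

Variables (cls : vnode T L -> nat) (i : nat).
Hypothesis e_sym : symmetric e.

Lemma sameComp_oldc x y : oldc l cls i x -> sameComp e l cls i x y -> oldc l cls i y.
Proof.
move=> ox /connectP [p]; case/lastP: p => [|q z] /=; first by move=> _ ->.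
by rewrite rcons_path last_rcons => /andP[_ /and3P[_ oz _]] ->.
Qed.

Lemma sameComp_sym x y : sameComp e l cls i x y = sameComp e l cls i y x.
Proof.
rewrite /sameComp; apply: sym_connect_sym => a b.
rewrite /vadj eq_sym (eq_sym (Psi a)) e_sym.
by case: (oldc l cls i a); case: (oldc l cls i b).
Qed.

End VirtualAdjacency.

Arguments sameComp_sym {T e L l cls i} e_sym x y.

Section Correctness.
Variables (k : nat) (T : finType) (e : rel T) (L : nat) (l : 'I_L).
Variables (cls : vnode T L -> nat) (i : nat) (cid : vnode T L -> nat) (id : T -> nat).
Hypotheses (e_sym : symmetric e) (id_inj : injective id).
Hypothesis id_lt : forall u, id u < #|T| ^ k.
Hypothesis cid_lt : forall x, oldc l cls i x -> cid x < #|T| ^ k.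
Hypothesis cid_eq : forall x y, oldc l cls i x -> oldc l cls i y ->
  (cid x == cid y) = sameComp e l cls i x y.

Local Notation oldc := (oldc l cls i).
Local Notation sameComp := (sameComp e l cls i).
Local Notation HNode := (HNode e l cls i).
Local Notation HEdge := (HEdge e l cls i).
Local Notation LI := (local_input e l cls i cid id).

Lemma cid_sameComp x y : oldc x -> oldc y -> cid x = cid y <-> sameComp x y.
Proof. by move=> ox oy; rewrite -cid_eq //; split => /eqP. Qed.

Lemma li_oldP u y c : li_old (LI u) y i c <->
  exists x, [/\ oldc x, vadj e (type1 l u) x, id (Psi x) = y & cid x = c].
Proof.
split => [/existsP[x /and5P[ox ux /eqP <- ix /eqP <-]]|[x [/andP[ox ix] ux <- <-]]].
  by exists x; rewrite /oldc ox ix.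
by apply/existsP; exists x; rewrite ox ux ix !eqxx.
Qed.

Lemma sees_compP u c : sees_comp (LI u) c <->
  exists x, [/\ oldc x, vadj e (type1 l u) x & cid x = c].
Proof.
split => [[y /li_oldP [x [ox ux _ <-]]]|[x [ox ux <-]]]; first by exists x.
by exists (id (Psi x)); apply/li_oldP; exists x.
Qed.

Lemma announcesP u c : announces (LI u) c <->
  exists x, [/\ oldc x, cid x = c & HNode u x].
Proof.
split.
  case=> /sees_compP [x [ox ux <-]] cid_uniq no_copy.
  exists x; split => //; apply/and3P; split.
  - apply/negP => /existsP[y /andP[xy /eqP uy]].
    have oy := sameComp_oldc ox xy.
    apply: no_copy; apply/li_oldP; exists y; split.
    + exact: oy.
    + by rewrite vadj_upper_old ?uy ?eqxx //; case/andP: oy.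
    + by rewrite uy.
    + by apply/(cid_sameComp oy ox); rewrite (sameComp_sym e_sym).
  - by rewrite -vadj_type12 //; case/andP: ox.
  - apply/forallP => y; apply/implyP => /andP[oy uy]; apply/(cid_sameComp ox oy).
    apply/esym/(cid_uniq (id (Psi y))); apply/li_oldP; exists y; split => //.
    by rewrite vadj_type12 //; case/andP: oy.
case=> x [ox <- /and3P[no_copy ux /forallP one_comp]]; split.
- by apply/sees_compP; exists x; rewrite vadj_type12 //; case/andP: ox.
- move=> y c' /li_oldP [x' [ox' ux' _ <-]].
  have := one_comp x'; rewrite ox' -vadj_type12 ?ux' //=; last by case/andP: ox'.
  by move=> xx'; apply/(cid_sameComp ox' ox); rewrite (sameComp_sym e_sym).
- case/li_oldP=> x' [ox' _ /id_inj ux' cx']; move/negP: no_copy; apply.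
  by apply/existsP; exists x'; rewrite ux' eqxx andbT; apply/(cid_sameComp ox ox').
Qed.

Lemma acceptsP w x : oldc x ->
  accepts (LI w) (cid x) <->
  [exists y, [&& oldc y, vadj e (type1 l w) y & ~~ sameComp x y]] /\
  [forall y, (oldc y && sameComp x y) ==> ~~ vadj e (type1 l w) y].
Proof.
move=> ox; split.
  case=> [[c' /sees_compP [x' [ox' wx' <-]] cx'] not_sees]; split.
    apply/existsP; exists x'; rewrite ox' wx' /=; apply/negP => xx'.
    by apply: cx'; apply/(cid_sameComp ox' ox); rewrite (sameComp_sym e_sym).
  apply/forallP => y; apply/implyP => /andP[oy xy]; apply/negP => wy.
  by apply: not_sees; apply/sees_compP; exists y; split => //; apply/(cid_sameComp oy ox);
    rewrite (sameComp_sym e_sym).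
case=> [/existsP[y /and3P[oy wy xy]] /forallP no_adj]; split.
  exists (cid y); first by apply/sees_compP; exists y.
  by move=> /esym /(cid_sameComp ox oy) xy'; rewrite xy' in xy.
case/sees_compP=> x' [ox' wx' /(cid_sameComp ox' ox)].
rewrite (sameComp_sym e_sym) => xx'.
by have := no_adj x'; rewrite ox' xx' wx'.
Qed.

Lemma HEdgeP v w x : oldc x ->
  HEdge v w x <-> [/\ HNode v x, e v w & accepts (LI w) (cid x)].
Proof.
move=> ox; split.
  case/and4P=> vx vw adj_other no_adj; split => //; last by apply/(acceptsP w ox).
  move: vw; rewrite vadj_type2_type1 => /orP[/eqP vw|//].
  case/and3P: vx => _ vx _; move/forallP: no_adj => /(_ x).
  by rewrite ox /sameComp connect0 vadj_type12 -?vw ?vx //; case/andP: ox.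
case=> vx vw /(acceptsP w ox) [adj_other no_adj].
by apply/and4P; split => //; rewrite vadj_type2_type1 vw orbT.
Qed.

Local Notation run := (run e l cls i cid id (helper_protocol k)).
Local Notation W := ((trunc_log 2 #|T|).+1 * k).

Definition heard_from (u : T) (sent : T -> option msg) (y : nat) : option msg :=
  if [pick w | e u w && (id w == y)] is Some w then sent w else None.

Lemma heard_from_nbr u w sent : e u w -> heard_from u sent (id w) = sent w.
Proof.
move=> uw; rewrite /heard_from; case: pickP => [w' /andP[_ /eqP /id_inj -> //]|none].
by move: (none w); rewrite uw eqxx.
Qed.

Lemma heard_fromP u sent y m : heard_from u sent y = Some m ->
  exists w, [/\ e u w, id w = y & sent w = Some m].
Proof. by rewrite /heard_from; case: pickP => // w /andP[uw /eqP <-] <-; exists w. Qed.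

Lemma run_state r u : [/\ st_input (run r u) = LI u, st_round (run r u) = r &
  forall j, j < r -> st_heard (run r u) j = heard_from u (fun w => send k (run j w))].
Proof.
elim: r u => [|r IH] u //; have [input_u round_u heard_u] := IH u.
split => //=; first by rewrite round_u.
move=> j; rewrite ltnS leq_eqVlt => /orP[/eqP ->|jr]; first by rewrite round_u eqxx.
by rewrite round_u (ltn_eqF jr) heard_u.
Qed.

Definition responses_of (w : T) : seq nat :=
  responses k (LI w) (heard_from w (fun v => announcement k (LI v))).

Lemma send_run j w : send k (run j w) =
  if j is j'.+1 then
    if j' < size (responses_of w) then Some (bits W (nth 0 (responses_of w) j')) else None
  else announcement k (LI w).
Proof.
have [input_w round_w heard_w] := run_state j w.
by rewrite /send round_w input_w; case: j {input_w round_w} heard_w => // j ->.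
Qed.

Lemma bits_idK x : x < #|T| ^ k -> bits_val (bits W x) = x.
Proof.
move=> x_lt; apply: bitsK; apply: leq_trans x_lt _.
rewrite expnM; case: k => [|k'] //.
by rewrite leq_exp2r // ltnW // trunc_log_ltn.
Qed.

Lemma announces_uniq li c c' : announces li c -> announces li c' -> c = c'.
Proof. by case=> [[y sees_c] _ _] [_ uniq_c' _]; apply: uniq_c' sees_c. Qed.

Lemma announces_lt v c : announces (LI v) c -> c < #|T| ^ k.
Proof. by case/announcesP=> x [ox <- _]; apply: cid_lt. Qed.

Lemma announcement_eq v c : announces (LI v) c -> announcement k (LI v) = Some (bits W c).
Proof.
move=> vc; rewrite /announcement; case: excluded_middle_informative => [ex|[]]; last by exists c.
by case: constructive_indefinite_description => c' vc' /=; rewrite (announces_uniq vc' vc).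
Qed.

Lemma announcementP v m : announcement k (LI v) = Some m ->
  exists2 c, announces (LI v) c & m = bits W c.
Proof.
rewrite /announcement; case: excluded_middle_informative => // ex.
by case: constructive_indefinite_description => c vc [<-]; exists c.
Qed.

Lemma mem_responses_of w y : (y \in responses_of w) = [&& y < #|T| ^ k, li_nbr (LI w) y &
  if heard_from w (fun v => announcement k (LI v)) y is Some m
  then classic_bool (accepts (LI w) (bits_val m)) else false].
Proof. by rewrite mem_filter mem_iota add0n andbC. Qed.

Lemma mem_responses_of_nbr w v : e w v -> (id v \in responses_of w) =
  if announcement k (LI v) is Some m then classic_bool (accepts (LI w) (bits_val m)) else false.
Proof.
move=> wv; rewrite mem_responses_of id_lt heard_from_nbr //.
by have -> : li_nbr (LI w) (id v) by apply/existsP; exists v; rewrite wv eqxx.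
Qed.

Lemma responses_of_lt w y : y \in responses_of w -> y < #|T| ^ k.
Proof. by rewrite mem_responses_of => /andP[]. Qed.

Lemma size_responses_of w : size (responses_of w) <= maxdeg e.
Proof.
apply: leq_trans (@leq_bigmax T (fun u => #|[pred w0 | e u w0]|) w).
rewrite cardE -(size_map id); apply: uniq_leq_size.
  by rewrite filter_uniq // iota_uniq.
move=> y; rewrite mem_responses_of => /and3P[_ /existsP[w' /andP[ww' /eqP <-]] _].
by apply: map_f; rewrite mem_enum.
Qed.

Lemma send_size r u m : send k (run r u) = Some m -> size m <= k.+2 * (trunc_log 2 #|T|).+1.
Proof.
have W_le : W <= k.+2 * (trunc_log 2 #|T|).+1 by rewrite mulnC leq_mul // ltnW.
rewrite send_run; case: r => [/announcementP [c _ ->]|j]; first by rewrite size_bits.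
by case: ifP => // _ [<-]; rewrite size_bits.
Qed.

Lemma silent_round_size_responses_lt r u j : 0 < j < r ->
  (forall y, st_heard (run r u) j y = None) ->
  forall w, e u w -> size (responses_of w) < j.
Proof.
case/andP=> j_gt0 jr silent w uw; have [_ _ heard_u] := run_state r u.
move: (silent (id w)); rewrite heard_u // heard_from_nbr // send_run.
by case: j j_gt0 {jr silent} => // j _; case: ltnP.
Qed.

Lemma acknowledged_byP r u y : silent_round_passed (run r u) ->
  acknowledged_by k (run r u) y <-> exists w, [/\ e u w, id w = y & id u \in responses_of w].
Proof.
have [input_u round_u heard_u] := run_state r u.
rewrite /acknowledged_by input_u round_u => -[j0]; rewrite round_u => j0r silent.
have size_lt := silent_round_size_responses_lt j0r silent; split.
  case=> [[//|j] /andP[_ jr]]; rewrite heard_u // => /heard_fromP [w [uw <-]].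
  rewrite send_run; case: ifP => // j_lt [ack]; exists w; split => //.
  have resp_j : nth 0 (responses_of w) j \in responses_of w by apply: mem_nth.
  by rewrite -(bits_idK (id_lt u)) -ack bits_idK ?(responses_of_lt resp_j).
case=> w [uw <- resp_u]; have := size_lt w uw; rewrite -index_mem in resp_u.
move: j0r => /andP[_ j0r] size_w.
have idx_r := leq_ltn_trans (leq_trans resp_u (ltnW size_w)) j0r.
exists (index (id u) (responses_of w)).+1; first by rewrite idx_r.
by rewrite heard_u // heard_from_nbr // send_run resp_u nth_index // -index_mem.
Qed.

Lemma accepts_announced w v x : e w v -> oldc x -> HNode v x ->
  (id v \in responses_of w) = classic_bool (accepts (LI w) (cid x)).
Proof.
move=> wv ox vx; have v_ann : announces (LI v) (cid x) by apply/announcesP; exists x.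
by rewrite mem_responses_of_nbr // (announcement_eq v_ann) bits_idK ?cid_lt.
Qed.

Lemma vE_outputP r u c y : silent_round_passed (run r u) ->
  announces (LI u) c /\ acknowledged_by k (run r u) y <->
  exists x w, [/\ oldc x, cid x = c, id w = y & HEdge u w x].
Proof.
move=> silent; rewrite (acknowledged_byP _ silent); split.
  case=> /announcesP [x [ox <- ux]] [w [uw <- resp_u]].
  exists x, w; split; [exact: ox | by [] | by [] |].
  apply/(HEdgeP u w ox); split; [exact: ux | exact: uw |].
  have wu : e w u by rewrite e_sym.
  by apply/classic_boolP; rewrite -(accepts_announced wu ox ux); exact: resp_u.
case=> x [w [ox <- <- /(HEdgeP u w ox) [ux uw acc]]].
split; first by apply/announcesP; exists x.
exists w; split; [exact: uw | by [] |].
have wu : e w u by rewrite e_sym.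
by rewrite (accepts_announced wu ox ux); apply/classic_boolP.
Qed.

Lemma wE_outputP r u c y : 0 < r ->
  (exists2 m, st_heard (run r u) 0 y = Some m & bits_val m = c /\ accepts (LI u) c) <->
  exists x v, [/\ oldc x, cid x = c, id v = y & HEdge v u x].
Proof.
have [_ _ heard_u] := run_state r u; move=> r_gt0; rewrite heard_u //; split.
  case=> m /heard_fromP [v [uv <-]]; rewrite send_run => /announcementP [c' v_ann ->].
  rewrite (bits_idK (announces_lt v_ann)) => -[<- acc].
  case/announcesP: v_ann => x [ox cx vx]; exists x, v; split; [exact: ox | by [] | by [] |].
  have vu : e v u by rewrite e_sym.
  by apply/(HEdgeP v u ox); split; [exact: vx | exact: vu | rewrite cx].
case=> x [v [ox <- <- /(HEdgeP v u ox) [vx vu acc]]].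
have uv : e u v by rewrite e_sym.
exists (bits W (cid x)); last by rewrite (bits_idK (cid_lt ox)).
rewrite (heard_from_nbr _ uv) send_run.
by apply: announcement_eq; apply/announcesP; exists x.
Qed.

Lemma output_correct r u o : output k (run r u) = Some o -> correct_output e l cls i cid id u o.
Proof.
have [input_u round_u _] := run_state r u.
rewrite /output; case: classic_boolP => // silent [<-].
have r_gt0 : 0 < r.
  by case: silent => j; rewrite round_u => /andP[j_gt0 /ltnW /(leq_trans j_gt0)].
rewrite /correct_output /= input_u; split; [move=> c | split=> c y].
- by split=> [/classic_boolP/announcesP | /announcesP/classic_boolP].
- by split=> [/classic_boolP/(vE_outputP _ _ silent) | /(vE_outputP _ _ silent)/classic_boolP].
- by split=> [/classic_boolP/(wE_outputP _ _ _ r_gt0) | /(wE_outputP _ _ _ r_gt0)/classic_boolP].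
Qed.

Lemma output_defined u : output k (run (k.+2 * (maxdeg e).+1) u) <> None.
Proof.
have [_ round_u heard_u] := run_state (k.+2 * (maxdeg e).+1) u.
have late : (maxdeg e).+1 < k.+2 * (maxdeg e).+1 by rewrite -[X in X < _]mul1n ltn_mul2r.
rewrite /output; case: classic_boolP => // -[]; exists (maxdeg e).+1; first by rewrite round_u.
move=> y; rewrite heard_u // /heard_from; case: pickP => // w _.
by rewrite send_run ltnNge size_responses_of.
Qed.

End Correctness.

Theorem lemma5 (k : nat) :
  exists (c : nat) (A : Alg),
  forall (T : finType) (e : rel T), symmetric e -> irreflexive e ->
  forall (L : nat) (l : 'I_L) (cls : vnode T L -> nat) (i : nat)
         (cid : vnode T L -> nat) (id : T -> nat),
    injective id ->
    (forall u, id u < #|T| ^ k) ->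
    (forall x, oldc l cls i x -> cid x < #|T| ^ k) ->
    (forall x y, oldc l cls i x -> oldc l cls i y ->
                 (cid x == cid y) = sameComp e l cls i x y) ->
    (forall r u m, @a_send A (run e l cls i cid id A r u) = Some m ->
                   size m <= c * (trunc_log 2 #|T|).+1) /\
    (forall r u o, @a_out A (run e l cls i cid id A r u) = Some o ->
                   correct_output e l cls i cid id u o) /\
    (forall u, @a_out A (run e l cls i cid id A (c * (maxdeg e).+1) u) <> None).
Proof.
exists k.+2, (helper_protocol k) => T e e_sym _ L l cls i cid id id_inj id_lt cid_lt cid_eq.
split; [|split].
- by move=> r u m; apply: (send_size (l:=l) (cls:=cls) (i:=i) (cid:=cid) (id:=id)).
- by move=> r u o; apply: (output_correct e_sym id_inj id_lt cid_lt cid_eq).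
- by move=> u; apply: (output_defined (l:=l) (cls:=cls) (i:=i) (cid:=cid) (id:=id)).
Qed.
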